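(* Let $H=(U,(A_1,\dots,A_m))$ be a harmonic set system with $|U|<m(m-2)$ and $m\ge 51$. Then for any two nonconsecutive sets $I,J\subseteq[m]$ of size $3$, $H_{I,J}=\emptyset$.
   Context: For $I_1,I_2\subseteq[m]$, $H_{I_1,I_2}=\bigcap_{i\in I_1}A_i\cap\bigcap_{i\in I_2}(U\setminus A_i)$ (empty intersection $=U$), $H_I=H_{I,\emptyset}$. The run decomposition of a finite set $I$ of positive integers is the partition of sizes, in nonincreasing order, of the maximal runs of consecutive integers in $I$. $H$ is harmonic if $|H_I|=|H_J|$ whenever $I,J\subseteq[m]$ have the same run decomposition. A set of integers is nonconsecutive if no two distinct elements differ by exactly $1$. *)

From mathcomp Require Import all_boot.
Set Implicit Arguments. Unset Strict Implicit. Unset Printing Implicit Defensive.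

(* Convention: the ground set [m] = {1,...,m} is represented by 'I_m, the
   ordinal i standing for the integer i+1.  This shift preserves which pairs
   are consecutive, hence run decompositions and nonconsecutiveness. *)

Definition Hsys (U : finType) (m : nat) (A : 'I_m -> {set U})
  (I1 I2 : {set 'I_m}) : {set U} :=
  [set x : U | [forall i in I1, x \in A i] && [forall i in I2, x \notin A i]].

Definition HI (U : finType) (m : nat) (A : 'I_m -> {set U}) (I : {set 'I_m}) :=
  Hsys A I set0.

Definition memn (m : nat) (I : {set 'I_m}) (n : nat) : bool :=
  [exists i in I, val i == n].

Fixpoint runlen_aux (m : nat) (I : {set 'I_m}) (fuel n : nat) : nat :=
  if fuel is fuel'.+1 then
    (if memn I n then (runlen_aux I fuel' n.+1).+1 else 0)
  else 0.

Definition runlen (m : nat) (I : {set 'I_m}) (n : nat) : nat :=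
  runlen_aux I m.+1 n.

Definition run_start (m : nat) (I : {set 'I_m}) (i : 'I_m) : bool :=
  (i \in I) && ((val i == 0) || ~~ memn I (val i).-1).

Definition run_decomp (m : nat) (I : {set 'I_m}) : seq nat :=
  sort geq [seq runlen I (val i) | i <- enum 'I_m & run_start I i].

Definition harmonic (U : finType) (m : nat) (A : 'I_m -> {set U}) : Prop :=
  forall I J : {set 'I_m}, run_decomp I = run_decomp J ->
    #|HI A I| = #|HI A J|.

Definition nonconsecutive (m : nat) (I : {set 'I_m}) : bool :=
  [forall i in I, forall j in I, val i != (val j).+1].

From mathcomp Require Import all_boot zify.
Set Implicit Arguments. Unset Strict Implicit. Unset Printing Implicit Defensive.

(* Take x in H_{I,J}.  Trading I or J for three even indices far from I ∪ J
   gives x in some H_{I',J'} with I' ∪ J' nonconsecutive.  Peeling one element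
   of J at a time, |H_{I,J}| = |H_{I,J∖j}| - |H_{I+j,J∖j}|, harmonicity shows
   that |H_{I,J}| only depends on |I| and |J| as long as I ∪ J is nonconsecutive
   and I ∩ J = ∅.  Hence H_{I2,J2} is nonempty for disjoint 3-subsets I2, J2 of
   the set E of even indices: some y has a trace T = {i ∈ E | y ∈ A_i} with
   3 <= |T| <= |E| - 3.  By the same transfer every |T|-subset of E is the trace
   on E of some point, so |U| >= C(|E|,|T|) >= C(|E|,3) >= m(m-2), because
   |E| = ⌈m/2⌉ >= 26. *)

Lemma exists_subset_card (T : finType) (E : {set T}) k :
  k <= #|E| -> exists2 Y : {set T}, Y \subset E & #|Y| = k.
Proof.
move=> le_kE; have : 0 < #|[set Y : {set T} | Y \subset E & #|Y| == k]|.
  by rewrite cards_draws bin_gt0.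
by case/card_gt0P => Y; rewrite inE => /andP[sYE /eqP cY]; exists Y.
Qed.

Lemma exists_disjoint_subsets (T : finType) (E : {set T}) a b : a + b <= #|E| ->
  exists I J : {set T}, [/\ I :|: J \subset E, [disjoint I & J], #|I| = a & #|J| = b].
Proof.
move=> le_abE; have [D sDE cD] := exists_subset_card le_abE.
have [I sID cI] := exists_subset_card (leq_trans (leq_addr b a) (eq_leq (esym cD))).
exists I, (D :\: I); split=> //.
- by rewrite (subset_trans _ sDE) // subUset sID subsetDl.
- by rewrite disjoint_sym disjoints_subset setDE subsetIr.
- by rewrite cardsD (setIidPr sID) cD cI addKn.
Qed.

Lemma leq_bin2r n k1 k2 : k1 <= k2 -> k2.*2 <= n -> 'C(n, k1) <= 'C(n, k2).
Proof.
elim: k2 => [|k IHk]; first by rewrite leqn0 => /eqP->.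
rewrite leq_eqVlt => /orP[/eqP-> // | lt_k1k] le_kn.
apply: leq_trans (IHk lt_k1k _) _; first lia.
by rewrite -(leq_pmul2l (ltn0Sn k)) mul_bin_left leq_mul2r; apply/orP; right; lia.
Qed.

Lemma leq_bin_mid n a k : a <= k -> k + a <= n -> 'C(n, a) <= 'C(n, k).
Proof.
move=> le_ak le_kan; have [le_k2n | lt_nk2] := leqP k.*2 n; first exact: leq_bin2r.
by rewrite -(bin_sub (m := k)) ?leq_bin2r //; lia.
Qed.

Lemma mul_subn2_leq_bin3 n m : 26 <= n -> m <= n.*2 -> m * (m - 2) <= 'C(n, 3).
Proof.
move=> n_ge26 le_mn.
have bin3 : 'C(n, 3) * 6 = n * (n.-1 * n.-2).
  by rewrite (bin_ffact n 3) !ffactnS ffactn0 muln1.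
nia.
Qed.

Lemma count_even_iota n : count (fun k => ~~ odd k) (iota 0 n) = uphalf n.
Proof.
elim: n => // n IHn; rewrite -addn1 iotaD count_cat IHn /= add0n addn0 addn1.
by rewrite uphalf_half; lia.
Qed.

Section Nonconsecutive.
Variable m : nat.
Implicit Types I X Y : {set 'I_m}.

Lemma nonconsecutiveP I :
  reflect {in I &, forall i j : 'I_m, i != j.+1 :> nat} (nonconsecutive I).
Proof.
apply: (iffP forall_inP) => [nI i j iI jI | nI i iI].
  exact: (forall_inP (nI i iI) j jI).
by apply/forall_inP => j jI; apply: nI.
Qed.

Lemma nonconsecutiveS X Y : X \subset Y -> nonconsecutive Y -> nonconsecutive X.
Proof.
move=> /subsetP sXY /nonconsecutiveP nY; apply/nonconsecutiveP => i j iX jX.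
by apply: nY; apply: sXY.
Qed.

(* ordS and ord_pred wrap around, so this may contain spurious elements;
   only the inclusion mem_neighbours matters. *)
Definition neighbours X : {set 'I_m} := (@ordS m) @: X :|: (@ord_pred m) @: X.

Lemma mem_neighbours X (i j : 'I_m) : j \in X ->
  i = j.+1 :> nat \/ j = i.+1 :> nat -> i \in neighbours X.
Proof.
move=> jX [ij | ji]; rewrite inE; apply/orP; [left | right]; apply/imsetP; exists j => //.
  by apply: val_inj; rewrite /= -ij modn_small.
by apply: val_inj; rewrite /= ji addSn /= modnDr modn_small.
Qed.

Lemma neighboursS X Y : X \subset Y -> neighbours X \subset neighbours Y.
Proof. by move=> sXY; rewrite setUSS ?imsetS. Qed.

Lemma card_neighbours X : #|neighbours X| <= #|X|.*2.
Proof. by rewrite -addnn (leq_trans (leq_card_setU _ _)) // leq_add ?leq_imset_card. Qed.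

Lemma nonconsecutiveU X Y : nonconsecutive X -> nonconsecutive Y ->
  [disjoint X & neighbours Y] -> nonconsecutive (X :|: Y).
Proof.
move=> /nonconsecutiveP nX /nonconsecutiveP nY dXY.
apply/nonconsecutiveP => i j; rewrite !inE => /orP[iX|iY] /orP[jX|jY];
  try by [apply: nX | apply: nY].
  apply/eqP => ij; suff : i \in neighbours Y by rewrite (disjointFr dXY).
  by apply: mem_neighbours jY _; left.
apply/eqP => ij; suff : j \in neighbours Y by rewrite (disjointFr dXY).
by apply: mem_neighbours iY _; right.
Qed.

Definition evens : {set 'I_m} := [set i : 'I_m | ~~ odd i].

Lemma nonconsecutive_evens : nonconsecutive evens.
Proof.
apply/nonconsecutiveP => i j; rewrite !inE => ei ej; apply/eqP => ij.
by move: ei; rewrite ij /= negbK (negbTE ej).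
Qed.

Lemma card_evens : #|evens| = uphalf m.
Proof.
rewrite cardsE cardE /enum_mem -enumT size_filter.
by rewrite -(count_even_iota m) -val_enum_ord count_map.
Qed.

Lemma run_start_nonconsecutive I :
  nonconsecutive I -> forall i, run_start I i = (i \in I).
Proof.
move=> /nonconsecutiveP nI i; rewrite /run_start; case: (boolP (i \in I)) => //= iI.
apply/orP; case Ei: (val i) => [|k]; [by left | right].
apply/existsP => -[j /andP[jI /eqP Ej]].
by have := nI i j iI jI; rewrite Ei Ej eqxx.
Qed.

Lemma runlen_nonconsecutive I i : nonconsecutive I -> i \in I -> runlen I i = 1.
Proof.
move=> /nonconsecutiveP nI iI; rewrite /runlen /=.
have -> : memn I i by apply/existsP; exists i; rewrite iI eqxx.
have runlen_succ f : runlen_aux I f (val i).+1 = 0.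
  case: f => //= f; case: ifP => // /existsP[j /andP[jI /eqP Ej]].
  by have := nI j i jI iI; rewrite Ej eqxx.
by rewrite runlen_succ.
Qed.

Lemma run_decomp_nonconsecutive I : nonconsecutive I -> run_decomp I = nseq #|I| 1.
Proof.
move=> nI; rewrite /run_decomp (eq_filter (run_start_nonconsecutive nI)).
have -> : #|I| = size (sort geq [seq runlen I (val i) | i <- enum 'I_m & i \in I]).
  by rewrite size_sort size_map size_filter enumT cardE /enum_mem size_filter.
apply/all_pred1P; rewrite all_sort all_map; apply/allP => i.
by rewrite mem_filter => /andP[iI _]; rewrite /= runlen_nonconsecutive.
Qed.

End Nonconsecutive.

Section HarmonicSystems.
Variables (U : finType) (m : nat) (A : 'I_m -> {set U}).
Implicit Types (E I J T : {set 'I_m}) (x : U).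

Definition trace x : {set 'I_m} := [set i | x \in A i].

Lemma mem_Hsys x I J :
  (x \in Hsys A I J) = (I \subset trace x) && (J \subset ~: trace x).
Proof.
by rewrite inE; congr andb; apply/forall_inP/subsetP => H i /H; rewrite !inE.
Qed.

Lemma Hsys_disjoint x I J : x \in Hsys A I J -> [disjoint I & J].
Proof.
rewrite mem_Hsys => /andP[sI sJ].
by rewrite disjoint_sym disjoints_subset (subset_trans sJ) // setCS.
Qed.

Lemma card_Hsys_D1 I J j : j \in J ->
  #|Hsys A I J| = #|Hsys A I (J :\ j)| - #|Hsys A (j |: I) (J :\ j)|.
Proof.
move=> jJ; have -> : Hsys A I J = Hsys A I (J :\ j) :\: Hsys A (j |: I) (J :\ j).
  apply/setP => x; rewrite [in RHS]inE !mem_Hsys -{1}(setD1K jJ) !subUset !sub1set !inE.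
  by case: (x \in A j); case: (I \subset trace x); case: (J :\ j \subset ~: trace x).
rewrite cardsD (setIidPr _) //; apply/subsetP => x.
by rewrite !mem_Hsys subUset => /andP[/andP[_ ->] ->].
Qed.

Lemma exists_nonconsecutive_Hsys E I J x :
  nonconsecutive E -> nonconsecutive I -> nonconsecutive J ->
  3 * (#|I| + #|J|) <= #|E| -> x \in Hsys A I J ->
  exists I' J', [/\ #|I'| = #|I|, #|J'| = #|J|,
                    nonconsecutive (I' :|: J') & x \in Hsys A I' J'].
Proof.
move=> nE nI nJ cE; rewrite mem_Hsys => /andP[sIx sJx].
pose R := E :\: neighbours (I :|: J).
have cR : #|I| + #|J| <= #|R|.
  have := card_neighbours (I :|: J); have := cardsU I J.
  have := subset_leq_card (subsetIr E (neighbours (I :|: J))); rewrite /R cardsD; lia.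
have far (Y K : {set 'I_m}) : Y \subset R -> K \subset I :|: J -> nonconsecutive K ->
    nonconsecutive (Y :|: K).
  move=> sYR sK nK; apply: nonconsecutiveU => //.
    exact: nonconsecutiveS (subset_trans sYR (subsetDl _ _)) nE.
  rewrite disjoints_subset (subset_trans sYR) // /R setDE.
  by rewrite (subset_trans (subsetIr _ _)) // setCS neighboursS.
have := cardsID (trace x) R; case: (leqP #|I| #|R :&: trace x|) => [le_I | lt_I] cRx.
  have [Y sY cY] := exists_subset_card le_I; exists Y, J; split=> //.
    by apply: far; rewrite ?subsetUr ?(subset_trans sY) ?subsetIl.
  by rewrite mem_Hsys sJx andbT (subset_trans sY) ?subsetIr.
have [Y sY cY] : exists2 Y : {set 'I_m}, Y \subset R :\: trace x & #|Y| = #|J|.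
  by apply: exists_subset_card; lia.
exists I, Y; split=> //.
  by rewrite setUC; apply: far; rewrite ?subsetUl ?(subset_trans sY) ?subsetDl.
by rewrite mem_Hsys sIx (subset_trans sY) // setDE subsetIr.
Qed.

Hypothesis harmonicA : harmonic A.

Lemma harmonic_card_Hsys I J I' J' :
  [disjoint I & J] -> [disjoint I' & J'] ->
  nonconsecutive (I :|: J) -> nonconsecutive (I' :|: J') ->
  #|I| = #|I'| -> #|J| = #|J'| -> #|Hsys A I J| = #|Hsys A I' J'|.
Proof.
have [n] := ubnP #|J|; elim: n => // n IHn in I J I' J' *.
move=> ltJn dIJ dIJ' nIJ nIJ' cII' cJJ'.
have [J0 | [j jJ]] := set_0Vmem J.
  move: cJJ'; rewrite J0 cards0 => /esym/eqP; rewrite cards_eq0 => /eqP->.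
  apply: harmonicA; rewrite !run_decomp_nonconsecutive ?cII' //.
    exact: nonconsecutiveS (subsetUl _ _) nIJ'.
  by rewrite J0 setU0 in nIJ.
have /card_gt0P[j' j'J'] : 0 < #|J'| by rewrite -cJJ' (cardsD1 j J) jJ.
have peel (K L : {set 'I_m}) k :
    k \in L -> [disjoint K & L] -> nonconsecutive (K :|: L) ->
    [/\ #|L| = #|L :\ k|.+1, #|k |: K| = #|K|.+1,
         [disjoint K & L :\ k] /\ [disjoint k |: K & L :\ k]
       & nonconsecutive (K :|: L :\ k) /\ nonconsecutive (k |: K :|: L :\ k)].
  move=> kL dKL nKL; have dKLk := disjointWr (subD1set L k) dKL.
  rewrite (cardsD1 k L) cardsU1 (disjointFl dKL kL) kL -setUA setUCA setD1K //.
  split=> //; split=> //.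
    by rewrite disjoints_subset subUset sub1set !inE eqxx -disjoints_subset.
  exact: nonconsecutiveS (setUS K (subD1set L k)) nKL.
have [cJ cjI [dI djI] [nI njI]] := peel I J j jJ dIJ nIJ.
have [cJ' cjI' [dI' djI'] [nI' njI']] := peel I' J' j' j'J' dIJ' nIJ'.
have ltJn' : #|J :\ j| < n by rewrite -ltnS -cJ.
have cJJ'D1 : #|J :\ j| = #|J' :\ j'| by apply: succn_inj; rewrite -cJ -cJ'.
rewrite (card_Hsys_D1 _ jJ) (card_Hsys_D1 _ j'J'); congr (_ - _).
  exact: IHn.
by apply: IHn; rewrite ?cjI ?cjI' ?cII'.
Qed.

Lemma harmonic_Hsys_neq0 I J I' J' :
  [disjoint I' & J'] -> nonconsecutive (I :|: J) -> nonconsecutive (I' :|: J') ->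
  #|I| = #|I'| -> #|J| = #|J'| -> Hsys A I J != set0 -> Hsys A I' J' != set0.
Proof.
move=> dIJ' nIJ nIJ' cII' cJJ' /set0Pn[x Hx].
rewrite -card_gt0 -(harmonic_card_Hsys (Hsys_disjoint Hx)) // card_gt0.
by apply/set0Pn; exists x.
Qed.

Lemma harmonic_trace_subsets E x T : nonconsecutive E ->
  T \subset E -> #|T| = #|E :&: trace x| -> exists y, E :&: trace y = T.
Proof.
move=> nE sTE cT.
have nE_sub (K L : {set 'I_m}) : K \subset E -> L \subset E -> nonconsecutive (K :|: L).
  by move=> sKE sLE; apply: nonconsecutiveS nE; rewrite subUset sKE.
have : Hsys A T (E :\: T) != set0.
  apply: (@harmonic_Hsys_neq0 (E :&: trace x) (E :\: trace x)).
  - by rewrite disjoint_sym disjoints_subset setDE subsetIr.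
  - by apply: nE_sub; rewrite ?subsetIl ?subsetDl.
  - by apply: nE_sub; rewrite ?subsetDl.
  - by rewrite cT.
  - by rewrite !cardsD (setIidPr sTE) cT.
  - apply/set0Pn; exists x; rewrite mem_Hsys subsetIr setDE.
    by apply/subsetP => i; rewrite !inE => /andP[].
case/set0Pn => y; rewrite mem_Hsys => /andP[sTy sETy]; exists y.
apply/eqP; rewrite eqEsubset [T \subset _]subsetI sTE sTy !andbT.
apply/subsetP => i; rewrite inE => /andP[iE iy]; apply: contraLR iy => iT.
by rewrite -in_setC (subsetP sETy) // inE iT.
Qed.

Lemma harmonic_card_traces E x : nonconsecutive E -> 'C(#|E|, #|E :&: trace x|) <= #|U|.
Proof.
move=> nE; rewrite -cards_draws -cardsT.
apply: leq_trans (leq_imset_card (fun y => E :&: trace y) [set: U]).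
apply/subset_leq_card/subsetP => T; rewrite inE => /andP[sTE /eqP cT].
by have [y <-] := harmonic_trace_subsets nE sTE cT; apply/imsetP; exists y.
Qed.

End HarmonicSystems.

Theorem proposition4p24 (U : finType) (m : nat) (A : 'I_m -> {set U}) :
  harmonic A -> #|U| < m * (m - 2) -> 51 <= m ->
  forall I J : {set 'I_m}, #|I| = 3 -> #|J| = 3 ->
    nonconsecutive I -> nonconsecutive J ->
    Hsys A I J = set0.
Proof.
move=> hA hU hm I J cI cJ nI nJ; apply/eqP; apply: contraTT hU => /set0Pn[x0 Hx0].
rewrite -leqNgt; pose E := evens m.
have nE : nonconsecutive E := nonconsecutive_evens m.
have cE : m <= #|E|.*2 by rewrite card_evens uphalfK leq_addl.
have E_ge26 : 26 <= #|E| by lia.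
have [|I' [J' [cI' cJ' nIJ' Hx0']]] := exists_nonconsecutive_Hsys nE nI nJ _ Hx0.
  by rewrite cI cJ; lia.
have [|I2 [J2 [sIJ2 dIJ2 cI2 cJ2]]] := @exists_disjoint_subsets _ E 3 3; first lia.
have : Hsys A I2 J2 != set0.
  apply: (harmonic_Hsys_neq0 hA dIJ2 nIJ' (nonconsecutiveS sIJ2 nE)).
  - by rewrite cI' cI cI2.
  - by rewrite cJ' cJ cJ2.
  - by apply/set0Pn; exists x0.
case/set0Pn => x; rewrite mem_Hsys => /andP[sI2x sJ2x].
move: sIJ2; rewrite subUset => /andP[sI2E sJ2E].
have cEx : 3 <= #|E :&: trace A x| by rewrite -cI2 subset_leq_card // subsetI sI2E.
have cEnx : 3 <= #|E :\: trace A x| by rewrite -cJ2 subset_leq_card // setDE subsetI sJ2E.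
have cE_split := cardsID (trace A x) E.
apply: leq_trans (harmonic_card_traces hA x nE).
by apply: leq_trans (mul_subn2_leq_bin3 E_ge26 cE) (leq_bin_mid _ _); lia.
Qed.
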